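(* A pointed connected graph $(g,v_0)\in\mathscr G_c^\bullet[U]$ is a prime structure of the set operad $\mathscr G_c^\bullet$ if and only if the graph $g$ is nonseparable, i.e. has no cutpoint.
   Context: $\mathscr G_c^\bullet[U]$ is the set of pairs $(g,v)$, where $g$ is a simple connected graph on vertex set $U$ and $v\in U$. It is a set operad with the following product. For an assembly $\{(g_B,v_B)\}_{B\in\pi}$ and an outer structure $(g'_\pi,B_0)$ (a connected graph on $\pi$ with distinguished block $B_0$), the product is $(g,v_{B_0})$. Here $g$ has all edges of the $g_B$, plus the edge $\{v_B,v_{B'}\}$ for each edge $\{B,B'\}$ of $g'_\pi$. A structure $m\in M[U]$ of a set operad $(M,\eta)$ is prime if whenever $m=\eta(a,m')$ then either $a$ is the assembly of singleton structures (and $m'$ is isomorphic to $m$), or $a=\{m\}$ (and $m'$ is the singleton structure on $\{U\}$). A cutpoint of a connected graph $g$ is a vertex whose deletion disconnects $g$. *)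

From mathcomp Require Import all_boot.
Set Implicit Arguments. Unset Strict Implicit. Unset Printing Implicit Defensive.

Definition simple_graph (V : finType) (U : {set V}) (E : {set {set V}}) : Prop :=
  forall e, e \in E -> exists x y, [/\ x != y, x \in U, y \in U & e = [set x; y]].

Definition adj (V : finType) (E : {set {set V}}) : rel V :=
  fun x y => [set x; y] \in E.

(* connectedness of the graph (U, E) (edges of E lie inside U) *)
Definition gconnected (V : finType) (U : {set V}) (E : {set {set V}}) : Prop :=
  forall x y, x \in U -> y \in U -> connect (adj E) x y.

Definition pointed_conn (V : finType) (U : {set V}) (E : {set {set V}}) (v : V) : Prop :=
  [/\ simple_graph U E, gconnected U E & v \in U].

(* Edge set of the operad product of the assembly {(gB B, vB B)}_{B in pi}
   with the outer structure (Eo, B0) on pi; the root of the product is vB B0. *)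
Definition prod_edges (T : finType) (pi : {set {set T}})
    (gB : {set T} -> {set {set T}}) (vB : {set T} -> T)
    (Eo : {set {set {set T}}}) : {set {set T}} :=
  (\bigcup_(B in pi) gB B) :|:
  [set [set vB B; vB B'] | B in pi, B' in pi & [set B; B'] \in Eo].

(* Prime structures of the set operad G_c^bullet: whenever (E, v) = eta(a, m')
   with a = {(gB B, vB B)}_{B in pi} an assembly over a partition pi of U and
   m' = (Eo, B0) in G_c^bullet[pi], then either a is the assembly of singleton
   structures (pi is the partition into singletons), or a = {(E, v)}. *)
Definition is_prime (T : finType) (U : {set T}) (E : {set {set T}}) (v : T) : Prop :=
  forall (pi : {set {set T}}) (gB : {set T} -> {set {set T}}) (vB : {set T} -> T)
         (Eo : {set {set {set T}}}) (B0 : {set T}),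
    partition pi U ->
    (forall B, B \in pi -> pointed_conn B (gB B) (vB B)) ->
    pointed_conn pi Eo B0 ->
    E = prod_edges pi gB vB Eo -> v = vB B0 ->
    pi = [set [set x] | x in U] \/ [/\ pi = [set U], gB U = E & vB U = v].

Definition del_vertex (V : finType) (E : {set {set V}}) (c : V) : {set {set V}} :=
  [set e in E | c \notin e].

Definition cutpoint (V : finType) (U : {set V}) (E : {set {set V}}) (c : V) : Prop :=
  c \in U /\ ~ gconnected (U :\ c) (del_vertex E c).

(* If g has no cutpoint and (g, v) is a product of an assembly over a partition
   pi with an outer structure, pi being neither trivial nor the partition into
   singletons, then some block B has a vertex x other than its root c and some
   other block contains a vertex y. Every edge leaving a non-root vertex of B
   stays in B (outer edges join roots), so c separates x from y (nocut_prime).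

   Conversely, given a cutpoint c, let B consist of c and one component of g - c
   not containing the root. Collapsing B (Section Collapse) writes (g, v) as the
   product of (g|B, c) with singletons over the partition {B} + singletons; that
   partition is neither trivial nor by singletons (cut_notprime). *)
From mathcomp Require Import all_boot.
Set Implicit Arguments. Unset Strict Implicit. Unset Printing Implicit Defensive.

Lemma adj_sym (T : finType) (E : {set {set T}}) : symmetric (adj E).
Proof. by move=> x y; rewrite /adj setUC. Qed.

Lemma simple_edge (T : finType) (U : {set T}) (E : {set {set T}}) a b :
  simple_graph U E -> [set a; b] \in E -> [/\ a != b, a \in U & b \in U].
Proof.
move=> sE /sE [x [y [xy xU yU eq_ab]]].
have /set2P ax : a \in [set x; y] by rewrite -eq_ab set21.
have /set2P bx : b \in [set x; y] by rewrite -eq_ab set22.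
split; [|by case: ax => ->|by case: bx => ->].
apply: contra xy => /eqP ab; move: eq_ab; rewrite -ab setUid => /setP eq_a.
have /set1P -> : x \in [set a] by rewrite eq_a set21.
by have /set1P -> : y \in [set a] by rewrite eq_a set22.
Qed.

Lemma connect_closed (T : finType) (e : rel T) (P : pred T) x y :
  (forall a b, P a -> e a b -> P b) -> P x -> connect e x y -> P y.
Proof.
move=> closedP Px /connectP [p pth ->]; elim: p x Px pth => [|a p IH] x Px //=.
by case/andP=> exa pth; apply: (IH a (closedP _ _ Px exa) pth).
Qed.

Lemma connect_until (T : finType) (e1 e2 : rel T) (P : pred T) x y :
  (forall a b, P a -> e1 a b -> (b = y \/ P b) /\ e2 a b) -> P x \/ x = y ->
  connect e1 x y -> connect e2 x y.
Proof.
move=> step Px /connectP [p pth ylast]; elim: p x Px pth ylast => [|a p IH] x Px /=.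
  by move=> _ ->; rewrite connect0.
case/andP=> exa pth ylast; case: Px => [Px|->]; last exact: connect0.
have [Pa e2xa] := step _ _ Px exa.
by apply: connect_trans (connect1 e2xa) (IH a _ pth ylast); case: Pa; [right|left].
Qed.

Lemma connect_map (T T' : finType) (e : rel T) (e' : rel T') (f : T -> T') x y :
  (forall a b, e a b -> f a = f b \/ e' (f a) (f b)) ->
  connect e x y -> connect e' (f x) (f y).
Proof.
move=> step /connectP [p pth ->]; elim: p x pth => [|a p IH] x /=.
  by rewrite connect0.
case/andP=> exa pth; apply: connect_trans _ (IH a pth).
by case: (step _ _ exa) => [->|e'xa]; [rewrite connect0 | apply: connect1].
Qed.

Lemma block_eq (T : finType) (pi : {set {set T}}) S S' x :
  trivIset pi -> S \in pi -> S' \in pi -> x \in S -> x \in S' -> S = S'.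
Proof.
by move=> tpi Spi S'pi xS xS'; rewrite -(def_pblock tpi Spi xS) (def_pblock tpi S'pi xS').
Qed.

Lemma partition_singletons (T : finType) (pi : {set {set T}}) (U : {set T}) :
  partition pi U -> (forall S, S \in pi -> #|S| <= 1) -> pi = [set [set x] | x in U].
Proof.
case/and3P=> /eqP covpi _ npi0 small.
have single S : S \in pi -> exists2 x, x \in U & S = [set x].
  move=> Spi; have /cards1P [x Sx] : #|S| == 1.
    rewrite eqn_leq small // card_gt0; by apply: contraNneq npi0 => <-.
  by exists x => //; rewrite -covpi; apply/bigcupP; exists S; rewrite // Sx set11.
apply/setP=> S; apply/idP/imsetP=> [/single //|[x]].
rewrite -covpi => /bigcupP [S' S'pi xS'] ->.
by have [y _ S'y] := single S' S'pi; move: xS'; rewrite S'y => /set1P ->; rewrite -S'y.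
Qed.

Lemma partition_other_block (T : finType) (pi : {set {set T}}) (U B : {set T}) :
  partition pi U -> pi != [set U] -> B \in pi -> exists2 B', B' \in pi & B' != B.
Proof.
case/and3P=> /eqP covpi _ _ piU Bpi.
have [B' /andP [B'pi B'B] | only_B] := pickP [pred B' in pi | B' != B].
  by exists B'.
case/eqP: piU; have piB : pi = [set B].
  apply/setP => S; rewrite inE; apply/idP/eqP => [Spi|->//].
  by apply/eqP; move: (only_B S); rewrite /= Spi => /negbFE.
by rewrite -covpi piB /cover big_set1.
Qed.

(* In an operad product, a vertex of a block B other than the root of B has all
   its neighbours in B: outer edges only join roots of blocks. *)
Lemma prod_edge_nonroot (T : finType) (pi : {set {set T}})
    (gB : {set T} -> {set {set T}}) (vB : {set T} -> T) (Eo : {set {set {set T}}})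
    (B : {set T}) a b :
  trivIset pi -> (forall S, S \in pi -> pointed_conn S (gB S) (vB S)) ->
  B \in pi -> a \in B -> a != vB B -> [set a; b] \in prod_edges pi gB vB Eo -> b \in B.
Proof.
move=> tpi blocks Bpi aB a_nroot; rewrite in_setU => /orP [].
  case/bigcupP=> S Spi abS; have [sS _ _] := blocks S Spi.
  have [_ aS bS] := simple_edge sS abS.
  by rewrite (block_eq tpi Bpi Spi aB aS).
case/imset2P=> S1 S2 S1pi /setIdP [S2pi _] eq_ab.
have root_B S : S \in pi -> a = vB S -> False.
  move=> Spi aS; have [_ _ rootS] := blocks S Spi.
  by move: a_nroot; rewrite aS (block_eq tpi Spi Bpi rootS) ?eqxx // -aS.
have /set2P [] : a \in [set vB S1; vB S2] by rewrite -eq_ab set21.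
  by move/(root_B S1 S1pi).
by move/(root_B S2 S2pi).
Qed.

(* With a single block U, the simple outer graph has no edge, so the product is
   the inner structure on U. *)
Lemma prod_edges_single (T : finType) (U : {set T})
    (gB : {set T} -> {set {set T}}) (vB : {set T} -> T) (Eo : {set {set {set T}}}) :
  simple_graph [set U] Eo -> prod_edges [set U] gB vB Eo = gB U.
Proof.
move=> sEo; rewrite /prod_edges big_set1; apply/setP=> e.
rewrite in_setU orb_idr // => /imset2P [S S' /set1P -> /setIdP [/set1P -> UU]].
by have [] := simple_edge sEo UU; rewrite eqxx.
Qed.

(* A nonseparable graph is prime: if a decomposition is neither trivial nor by
   singletons, some block B has a vertex x besides its root c, and some other
   block contains a vertex y; by prod_edge_nonroot, every path from x avoiding c
   stays in B, so c separates x from y. *)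
Lemma nocut_prime (T : finType) (U : {set T}) (E : {set {set T}}) (v : T) :
  (forall c, ~ cutpoint U E c) -> is_prime U E v.
Proof.
move=> nocut pi gB vB Eo B0 partpi blocks [sEo _ B0pi] Edef vdef.
have [covpi tpi _] := and3P partpi; move/eqP: covpi => covpi.
have sub_U S : S \in pi -> S \subset U by move=> Spi; rewrite -covpi bigcup_sup.
have [piU|piU] := eqVneq pi [set U].
  have B0U : B0 = U by apply/set1P; rewrite -piU.
  by right; rewrite Edef vdef B0U piU prod_edges_single // -piU.
have [pisg|pisg] := eqVneq pi [set [set x] | x in U]; first by left.
have [B /andP [Bpi Bbig] | small] := pickP [pred B in pi | 1 < #|B|]; last first.
  case/eqP: pisg; apply: partition_singletons partpi _ => S Spi.
  by move: (small S); rewrite /= Spi ltnNge => /negbFE.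
set c := vB B; have [_ _ cB] := blocks B Bpi.
have [x] : exists x, x \in B :\ c.
  by apply/set0Pn; rewrite -card_gt0; move: Bbig; rewrite (cardsD1 c) cB.
rewrite in_setD1 => /andP [xc xB].
have [B' B'pi B'B] := partition_other_block partpi piU Bpi.
have [y yB'] : exists y, y \in B'.
  by apply/set0Pn; apply: contraFneq (partition0 partpi) => <-.
have BB'_eq : y \in B -> B' = B by move=> yB; exact: block_eq tpi B'pi Bpi yB' yB.
exfalso; apply: (nocut c); split; first exact: subsetP (sub_U B Bpi) c cB.
move/(_ x y); rewrite !in_setD1 xc (subsetP (sub_U B Bpi)) //.
have yc : y != c by apply: contraNneq B'B => yc; rewrite BB'_eq // yc.
rewrite yc (subsetP (sub_U B' B'pi)) // => /(_ isT isT) xy.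
have stay a b : (a \in B) && (a != c) -> adj (del_vertex E c) a b -> (b \in B) && (b != c).
  case/andP=> aB ac; rewrite /adj inE => /andP [abE].
  rewrite !inE negb_or eq_sym (eq_sym c b) => /andP [_ ->]; rewrite andbT.
  by apply: (prod_edge_nonroot (Eo := Eo)) tpi blocks Bpi aB ac _; rewrite -Edef.
have /andP [yB _] : (y \in B) && (y != c).
  by apply: connect_closed stay _ xy; rewrite xB xc.
by move/eqP: B'B; apply; apply: BB'_eq.
Qed.

Definition induced (T : finType) (E : {set {set T}}) (B : {set T}) : {set {set T}} :=
  [set e in E | e \subset B].

(* Let B be a set of at least two vertices with a distinguished
   vertex c, such that B induces a connected subgraph and only c has neighbours
   outside B. Then (E, v) is the operad product of the structure (E|B, c) on B and
   of trivial structures on the remaining singletons, with outer graph the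
   quotient of E by B, provided the root v is not in B except possibly as c. *)
Section Collapse.

Variables (T : finType) (U : {set T}) (E : {set {set T}}) (B : {set T}) (c : T).
Hypotheses (simpleE : simple_graph U E) (connE : gconnected U E).
Hypotheses (BU : B \subset U) (cB : c \in B) (B_nsg : forall u, B != [set u]).
Hypothesis B_closed : forall a b, a \in B -> a != c -> [set a; b] \in E -> b \in B.
Hypothesis B_conn : gconnected B (induced E B).

Definition collapse (u : T) : {set T} := if u \in B then B else [set u].

Definition collapse_partition : {set {set T}} := [set collapse u | u in U].

Definition collapse_root (S : {set T}) : T :=
  if S == B then c else odflt c [pick t in S].

Definition collapse_block (S : {set T}) : {set {set T}} :=
  if S == B then induced E B else set0.

Definition collapse_outer : {set {set {set T}}} :=
  [set [set collapse a; collapse b] | a in U, b in U &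
     ([set a; b] \in E) && (collapse a != collapse b)].

Lemma collapse_eq a b : (collapse a == collapse b) = (a == b) || (a \in B) && (b \in B).
Proof.
rewrite /collapse; case: (boolP (a \in B)) => aB; case: (boolP (b \in B)) => bB.
- by rewrite eqxx orbT.
- rewrite (negbTE (B_nsg b)) andbF orbF.
  by apply/esym/negbTE; apply: contraNneq bB => <-.
- rewrite eq_sym (negbTE (B_nsg a)) orbF.
  by apply/esym/negbTE; apply: contraNneq aB => ->.
- by rewrite (inj_eq set1_inj) orbF.
Qed.

Lemma mem_collapse a y : (y \in collapse a) = (collapse y == collapse a).
Proof.
rewrite collapse_eq {1}/collapse; case: (boolP (a \in B)) => aB; last first.
  by rewrite inE andbF orbF.
by rewrite andbT; case: eqP => // ->.
Qed.

Lemma collapse_partitionP : partition collapse_partition U.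
Proof.
have -> : collapse_partition = preim_partition collapse U; last exact: preim_partitionP.
apply: eq_in_imset => u uU; apply/setP => y.
rewrite inE mem_collapse [collapse u == _]eq_sym andb_idl // => /eqP fy.
have sub_u : collapse u \subset U by rewrite /collapse; case: ifP; rewrite ?sub1set.
by apply: (subsetP sub_u); rewrite -fy mem_collapse.
Qed.

Lemma collapse_in u : u \in U -> collapse u \in collapse_partition.
Proof. exact: imset_f. Qed.

Lemma block_in : B \in collapse_partition.
Proof. by have := collapse_in (subsetP BU c cB); rewrite /collapse cB. Qed.

Lemma collapse_rootE u : collapse_root (collapse u) = if u \in B then c else u.
Proof.
rewrite /collapse_root /collapse; case: (boolP (u \in B)) => uB /=.
  by rewrite eqxx.
rewrite eq_sym (negbTE (B_nsg u)); case: pickP => [t /set1P //|/(_ u)].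
by rewrite set11.
Qed.

Lemma collapse_root_edge a b :
  [set a; b] \in E -> collapse a != collapse b -> collapse_root (collapse a) = a.
Proof.
move=> abE ab_split; rewrite collapse_rootE; case: ifP => // aB.
apply/esym/eqP; apply: contraNT ab_split => ac.
by rewrite collapse_eq aB (B_closed aB ac abE) orbT.
Qed.

Lemma collapse_blocks S :
  S \in collapse_partition -> pointed_conn S (collapse_block S) (collapse_root S).
Proof.
case/imsetP=> u _ ->; rewrite collapse_rootE /collapse_block /collapse.
case: ifP => uB; rewrite ?eqxx; last rewrite eq_sym (negbTE (B_nsg u)).
  split=> // e /setIdP [eE eB]; have [x [y [xy _ _ exy]]] := simpleE eE.
  by exists x, y; split=> //; apply: (subsetP eB); rewrite exy !inE eqxx ?orbT.
split; [by move=> e; rewrite inE | | exact: set11].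
by move=> x y /set1P -> /set1P ->; apply: connect0.
Qed.

Lemma collapse_outer_pointed v :
  v \in U -> pointed_conn collapse_partition collapse_outer (collapse v).
Proof.
move=> vU; split; last exact: collapse_in.
- move=> _ /imset2P [a b aU /setIdP [bU /andP [_ ab_split]] ->].
  by exists (collapse a), (collapse b); rewrite !collapse_in.
- move=> _ _ /imsetP [x xU ->] /imsetP [y yU ->].
  apply: connect_map (connE xU yU) => a b; rewrite /adj => abE.
  have [_ aU bU] := simple_edge simpleE abE.
  have [->|ab_split] := eqVneq (collapse a) (collapse b); [by left | right].
  by apply/imset2P; exists a b => //; rewrite inE bU abE.
Qed.

Lemma collapse_prod :
  E = prod_edges collapse_partition collapse_block collapse_root collapse_outer.
Proof.
apply/setP=> e; apply/idP/idP => [eE | ]; rewrite in_setU.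
  have [a [b [ab aU bU eab]]] := simpleE eE; rewrite eab in eE *.
  have [ab_same|ab_split] := eqVneq (collapse a) (collapse b).
    have /andP [aB bB] : (a \in B) && (b \in B).
      by move/eqP: ab_same; rewrite collapse_eq (negbTE ab).
    apply/orP; left; apply/bigcupP; exists B; rewrite ?block_in // /collapse_block eqxx.
    by rewrite inE eE; apply/subsetP => t /set2P [] ->.
  apply/orP; right; apply/imset2P; exists (collapse a) (collapse b); rewrite ?collapse_in //.
    by rewrite inE collapse_in //; apply/imset2P; exists a b; rewrite // inE bU eE.
  have baE : [set b; a] \in E by rewrite setUC.
  by rewrite (collapse_root_edge eE ab_split) (collapse_root_edge baE) // eq_sym.
case/orP=> [/bigcupP [S _] | /imset2P [S1 S2 _ /setIdP [_ S12] ->]].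
  by rewrite /collapse_block; case: (S == B); rewrite inE // => /andP [].
case/imset2P: S12 => a b _ /setIdP [_ /andP [abE ab_split]] eq12.
have ba_split : collapse b != collapse a by rewrite eq_sym.
have baE : [set b; a] \in E by rewrite setUC.
have -> : [set collapse_root S1; collapse_root S2] = collapse_root @: [set S1; S2].
  by rewrite imsetU1 imset_set1.
rewrite eq12 imsetU1 imset_set1.
by rewrite (collapse_root_edge abE ab_split) (collapse_root_edge baE ba_split).
Qed.

Lemma collapse_not_prime v :
  v \in U -> (v \in B -> v = c) -> B != U -> ~ is_prime U E v.
Proof.
move=> vU v_root BnU prime.
have Bpart := block_in.
have root_v : v = collapse_root (collapse v).
  by rewrite collapse_rootE; case: ifP => // /v_root.
have [singles | [single _ _]] :=
  prime _ _ _ _ (collapse v) collapse_partitionP collapse_blocks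
    (collapse_outer_pointed vU) collapse_prod root_v.
- by move: Bpart; rewrite singles => /imsetP [u _ Bu]; case/eqP: (B_nsg u).
- by move: Bpart; rewrite single => /set1P Bu; case/eqP: BnU.
Qed.

End Collapse.

Lemma cutpoint_witness (T : finType) (U : {set T}) (E : {set {set T}}) (c v : T) :
  cutpoint U E c -> exists w z, [/\ w \in U :\ c, z \in U :\ c,
    ~~ connect (adj (del_vertex E c)) w z &
    (v == c) || ~~ connect (adj (del_vertex E c)) w v].
Proof.
case=> _ disconnected; set G := adj (del_vertex E c).
have symG : connect_sym G := sym_connect_sym (@adj_sym _ _).
have [[x y] /and3P [/= xU yU nxy] | conn] :=
  pickP [pred p : T * T | [&& p.1 \in U :\ c, p.2 \in U :\ c & ~~ connect G p.1 p.2]].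
  have [_|vc] := eqVneq v c; first by exists x, y.
  have [xv|xv] := boolP (connect G x v); last by exists x, y.
  exists y, x; rewrite symG nxy; split=> //.
  by apply: contra nxy => yv; apply: connect_trans xv _; rewrite symG.
case: disconnected => x y xU yU.
by move: (conn (x, y)); rewrite /= xU yU /= => /negbFE.
Qed.

Section CutBlock.

Variables (T : finType) (U : {set T}) (E : {set {set T}}) (c w : T).
Hypotheses (simpleE : simple_graph U E) (connE : gconnected U E).
Hypotheses (cU : c \in U) (wU : w \in U :\ c).

Definition component : {set T} :=
  [set u in U :\ c | connect (adj (del_vertex E c)) w u].

Definition cut_block : {set T} := c |: component.

Lemma component_closed a b :
  a \in component -> [set a; b] \in E -> b = c \/ b \in component.
Proof.
case/setIdP=> /setD1P [ac _] wa abE; have [_ _ bU] := simple_edge simpleE abE.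
have [->|bc] := eqVneq b c; [by left | right].
rewrite inE in_setD1 bc bU; apply: connect_trans wa (connect1 _).
by rewrite /adj inE abE !inE negb_or ![c == _]eq_sym ac bc.
Qed.

Lemma cut_block_sub : cut_block \subset U.
Proof. by apply/subsetP=> u /setU1P [->|/setIdP [/setD1P []]]. Qed.

Lemma cut_block_nsg u : cut_block != [set u].
Proof.
have wc : w != c by case/setD1P: wU.
apply: contra wc => /eqP Bu.
have /set1P -> : w \in [set u] by rewrite -Bu setU1r // inE wU connect0.
by have /set1P -> : c \in [set u] by rewrite -Bu setU11.
Qed.

Lemma cut_block_closed a b :
  a \in cut_block -> a != c -> [set a; b] \in E -> b \in cut_block.
Proof.
case/setU1P=> [-> /eqP //|aC _ abE].
by case: (component_closed aC abE) => [->|bC]; rewrite ?setU11 ?setU1r.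
Qed.

(* Every vertex of the block reaches c inside the block: follow a path of E to c;
   until it reaches c it stays in the component, by component_closed. *)
Lemma cut_block_conn : gconnected cut_block (induced E cut_block).
Proof.
have to_c a : a \in cut_block -> connect (adj (induced E cut_block)) a c.
  move=> aB; apply: (@connect_until _ _ _ (mem component)).
  - move=> a' b' a'C; rewrite /adj => a'b'E.
    have b'B : b' = c \/ b' \in component := component_closed a'C a'b'E.
    split=> //; rewrite inE a'b'E; apply/subsetP => t /set2P [] ->.
      exact: setU1r.
    by case: b'B => [->|b'C]; rewrite ?setU11 ?setU1r.
  - by case/setU1P: aB => [->|aC]; [right|left].
  - exact: connE (subsetP cut_block_sub a aB) cU.
move=> a b aB bB; apply: connect_trans (to_c a aB) _.
by rewrite (sym_connect_sym (@adj_sym _ _)); exact: to_c.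
Qed.

End CutBlock.

(* A graph with a cutpoint c is not prime: collapse the block cut_block c w,
   where the witness w of cutpoint_witness keeps the root outside the block
   (unless the root is c) and the vertex z lies outside it. *)
Lemma cut_notprime (T : finType) (U : {set T}) (E : {set {set T}}) (v c : T) :
  pointed_conn U E v -> cutpoint U E c -> ~ is_prime U E v.
Proof.
move=> [simpleE connE vU] cut; have cU := cut.1.
have [w [z [wU zU nwz v_out]]] := cutpoint_witness v cut.
apply: (collapse_not_prime simpleE connE (cut_block_sub E w cU) (setU11 c _)
          (cut_block_nsg E wU) (@cut_block_closed _ _ _ c w simpleE)
          (cut_block_conn simpleE connE cU) vU).
- case/setU1P=> // /setIdP [/setD1P [vc _] wv].
  by move: v_out; rewrite (negbTE vc) wv.
- apply: contraNneq nwz => BU.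
  have /setU1P [zc|/setIdP [] //] : z \in cut_block U E c w.
    by rewrite BU; case/setD1P: zU.
  by case/setD1P: zU; rewrite zc eqxx.
Qed.

Theorem mainTheorem9 (T : finType) (U : {set T}) (E : {set {set T}}) (v : T) :
  pointed_conn U E v ->
  (is_prime U E v <-> (forall c : T, ~ cutpoint U E c)).
Proof.
move=> pc; split=> [prime c cut | nocut]; last exact: nocut_prime.
exact: cut_notprime pc cut prime.
Qed.
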